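(* The set $\mathcal C=(0,\infty)\times\mathbb R$ is an invariant control set for the system (N).
   Context: Fix $\delta\in\mathbb R$, $\gamma>0$, $D>0$. System (N): $d\xi=-\xi^4\eta\,dt$, $d\eta=(\delta\xi+2\xi^3\eta^2-\gamma\xi^4\eta)dt+\sqrt{2D}\,dW$. Associated control problem: $\dot z_1=-z_1^4z_2$, $\dot z_2=\delta z_1+2z_1^3z_2^2-\gamma z_1^4z_2+\sqrt{2D}\,u(t)$ with smooth admissible controls $u:[0,\infty)\to\mathbb R$. For $(\xi,\eta)\in\mathbb R^2$ and $T>0$, $\mathcal O(T,\xi,\eta)$ is the set of points $(z_1(T),z_2(T))$ reachable at time $T$ by a solution of the control problem starting from $(\xi,\eta)$, and $\mathcal O(\xi,\eta)=\bigcup_{T>0}\mathcal O(T,\xi,\eta)$. A nonempty set $\mathcal C\subset\mathbb R^2$ is an invariant control set for (N) if $\overline{\mathcal C}=\overline{\mathcal O(\xi,\eta)}$ for all $(\xi,\eta)\in\mathcal C$ and $\mathcal C$ is maximal with respect to inclusion among sets with this property. *)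

From Stdlib Require Import Reals.
Open Scope R_scope.

Definition set2 := R -> R -> Prop.

Definition smooth (u : R -> R) : Prop :=
  exists f : nat -> R -> R,
    f O = u /\ forall (n : nat) (x : R), derivable_pt_lim (f n) x (f (S n) x).

Definition ctrl_solution (delta gamma D : R) (u : R -> R) (T : R)
    (z1 z2 : R -> R) : Prop :=
  forall t, 0 <= t <= T ->
    derivable_pt_lim z1 t (- (z1 t) ^ 4 * z2 t) /\
    derivable_pt_lim z2 t
      (delta * z1 t + 2 * (z1 t) ^ 3 * (z2 t) ^ 2
       - gamma * (z1 t) ^ 4 * z2 t + sqrt (2 * D) * u t).

Definition reach_T (delta gamma D T xi eta : R) : set2 :=
  fun p q => exists (u : R -> R) (z1 z2 : R -> R),
    smooth u /\ ctrl_solution delta gamma D u T z1 z2 /\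
    z1 0 = xi /\ z2 0 = eta /\ z1 T = p /\ z2 T = q.

Definition reach (delta gamma D xi eta : R) : set2 :=
  fun p q => exists T, 0 < T /\ reach_T delta gamma D T xi eta p q.

(* Closure in R^2 (Euclidean topology, expressed with the max-norm). *)
Definition closure2 (S : set2) : set2 :=
  fun p q => forall eps, 0 < eps ->
    exists a b, S a b /\ Rabs (p - a) < eps /\ Rabs (q - b) < eps.

Definition set2_eq (A B : set2) : Prop := forall p q, A p q <-> B p q.
Definition set2_sub (A B : set2) : Prop := forall p q, A p q -> B p q.

Definition ctrl_prop (delta gamma D : R) (C : set2) : Prop :=
  forall xi eta, C xi eta ->
    set2_eq (closure2 C) (closure2 (reach delta gamma D xi eta)).

Definition invariant_control_set (delta gamma D : R) (C : set2) : Prop :=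
  (exists xi eta, C xi eta) /\
  ctrl_prop delta gamma D C /\
  (forall C' : set2, (exists xi eta, C' xi eta) -> ctrl_prop delta gamma D C' ->
     set2_sub C C' -> set2_sub C' C).

(** Controllability of the half-plane: writing [z1 = exp (-b)] and
    [z2 = b' exp (3 b)] for any smooth [b] solves [z1' = - z1^4 z2], and the
    control is then read off from the equation for [z2']; a cubic [b]
    interpolates any initial and final data with [z1 > 0] in time 1.
    Invariance of the sign of [z1]: [z1' = a z1] with [|a| = |z1^3 z2| <= K]
    on [0, T], so [z1^2 exp (-2 K t)] decreases and [z1^2 exp (2 K t)]
    increases; hence [z1 = 0] is invariant and [z1 > 0] is never left.
    Thus every orbit from [z1 > 0] is dense in the closed half-plane, while
    orbits from [z1 = 0] stay on the axis, which forbids any larger set. *)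

From Stdlib Require Import Reals Ranalysis5 Lra Psatz.
Open Scope R_scope.

(* Expressions in one variable closed under differentiation: their values are
   smooth functions. *)
Inductive term :=
  | TConst (r : R) | TVar | TAdd (e1 e2 : term) | TMul (e1 e2 : term)
  | TExp (e : term).

Fixpoint eval (e : term) (x : R) : R :=
  match e with
  | TConst r => r
  | TVar => x
  | TAdd e1 e2 => eval e1 x + eval e2 x
  | TMul e1 e2 => eval e1 x * eval e2 x
  | TExp e => exp (eval e x)
  end.

Fixpoint dterm (e : term) : term :=
  match e with
  | TConst _ => TConst 0
  | TVar => TConst 1
  | TAdd e1 e2 => TAdd (dterm e1) (dterm e2)
  | TMul e1 e2 => TAdd (TMul (dterm e1) e2) (TMul e1 (dterm e2))
  | TExp e => TMul (dterm e) (TExp e)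
  end.

Lemma derivable_pt_lim_eval (e : term) (x : R) :
  derivable_pt_lim (eval e) x (eval (dterm e) x).
Proof.
  induction e as [r| |e1 IH1 e2 IH2|e1 IH1 e2 IH2|e IH]; simpl.
  - apply derivable_pt_lim_const.
  - apply derivable_pt_lim_id.
  - exact (derivable_pt_lim_plus _ _ _ _ _ IH1 IH2).
  - exact (derivable_pt_lim_mult _ _ _ _ _ IH1 IH2).
  - rewrite Rmult_comm.
    exact (derivable_pt_lim_comp _ exp _ _ _ IH (derivable_pt_lim_exp _)).
Qed.

Lemma smooth_eval (e : term) : smooth (eval e).
Proof.
  exists (fun n => eval (Nat.iter n dterm e)); split; [reflexivity|].
  intros n x; apply derivable_pt_lim_eval.
Qed.

Section FlatCoordinates.
Variables (delta gamma D : R) (b : term).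

Definition flat_z1 : term := TExp (TMul (TConst (-1)) b).

Definition flat_z2 : term :=
  TMul (dterm b) (TMul (TExp b) (TMul (TExp b) (TExp b))).

Definition drift : term :=
  TAdd (TMul (TConst delta) flat_z1)
    (TAdd (TMul (TConst 2)
             (TMul (TMul flat_z1 (TMul flat_z1 flat_z1)) (TMul flat_z2 flat_z2)))
       (TMul (TConst (- gamma))
          (TMul (TMul flat_z1 (TMul flat_z1 (TMul flat_z1 flat_z1))) flat_z2))).

Definition flat_control : term :=
  TMul (TConst (/ sqrt (2 * D))) (TAdd (dterm flat_z2) (TMul (TConst (-1)) drift)).

Lemma flat_ctrl_solution (T : R) : 0 < D ->
  ctrl_solution delta gamma D (eval flat_control) T (eval flat_z1) (eval flat_z2).
Proof.
  intros hD t _; split.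
  - replace (- eval flat_z1 t ^ 4 * eval flat_z2 t) with (eval (dterm flat_z1) t);
      [apply derivable_pt_lim_eval|].
    assert (hinv : exp (-1 * eval b t) * exp (eval b t) = 1).
    { rewrite <- exp_plus; replace (-1 * eval b t + eval b t) with 0 by ring.
      apply exp_0. }
    simpl; set (F := exp (-1 * eval b t)) in *; set (E := exp (eval b t)) in *.
    transitivity (- F * eval (dterm b) t * ((F * E) * (F * E) * (F * E))); [|ring].
    rewrite hinv; ring.
  - match goal with |- derivable_pt_lim _ _ ?l =>
      replace l with (eval (dterm flat_z2) t) end; [apply derivable_pt_lim_eval|].
    assert (hs : sqrt (2 * D) <> 0) by (apply Rgt_not_eq, sqrt_lt_R0; lra).
    unfold flat_control, drift; cbn [eval]; field; exact hs.
Qed.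

End FlatCoordinates.

Definition hermite_cubic (B0 D0 B1 D1 : R) : term :=
  let c2 := 3 * (B1 - B0) - 2 * D0 - D1 in
  let c3 := 2 * (B0 - B1) + D0 + D1 in
  TAdd (TConst B0)
    (TMul TVar (TAdd (TConst D0) (TMul TVar (TAdd (TConst c2) (TMul TVar (TConst c3)))))).

Lemma hermite_cubic_spec (B0 D0 B1 D1 : R) :
  let b := hermite_cubic B0 D0 B1 D1 in
  eval b 0 = B0 /\ eval (dterm b) 0 = D0 /\ eval b 1 = B1 /\ eval (dterm b) 1 = D1.
Proof. simpl; repeat split; ring. Qed.

Lemma reach_of_pos (delta gamma D xi eta p q : R) :
  0 < D -> 0 < xi -> 0 < p -> reach delta gamma D xi eta p q.
Proof.
  intros hD hxi hp.
  set (b := hermite_cubic (- ln xi) (eta * xi ^ 3) (- ln p) (q * p ^ 3)).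
  destruct (hermite_cubic_spec (- ln xi) (eta * xi ^ 3) (- ln p) (q * p ^ 3))
    as [hb0 [hd0 [hb1 hd1]]].
  exists 1; split; [lra|].
  exists (eval (flat_control delta gamma D b)), (eval (flat_z1 b)), (eval (flat_z2 b)).
  split; [apply smooth_eval|]; split; [apply flat_ctrl_solution; lra|].
  assert (exp_opp_ln : forall y, 0 < y -> exp (- ln y) = / y).
  { intros y hy; rewrite exp_Ropp, exp_ln; auto. }
  assert (exp_neg_opp_ln : forall y, 0 < y -> exp (-1 * - ln y) = y).
  { intros y hy; replace (-1 * - ln y) with (ln y) by ring; apply exp_ln; auto. }
  unfold flat_z1, flat_z2; cbn [eval]; fold b in hb0, hd0, hb1, hd1.
  rewrite hb0, hd0, hb1, hd1, !exp_opp_ln, !exp_neg_opp_ln by auto.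
  repeat split; field; lra.
Qed.

Lemma le_of_derive_nonpos (g g' : R -> R) (a b : R) : a <= b ->
  (forall t, a <= t <= b -> derivable_pt_lim g t (g' t)) ->
  (forall t, a <= t <= b -> g' t <= 0) -> g b <= g a.
Proof.
  intros hab hd hneg; destruct (Req_dec a b) as [<-|hne]; [lra|].
  destruct (MVT_cor2 g g' a b ltac:(lra) hd) as [c [hc hcab]].
  pose proof (hneg c ltac:(lra)); nra.
Qed.

Section LinearEquation.
Variables (f a : R -> R) (T K : R).
Hypothesis hderiv : forall t, 0 <= t <= T -> derivable_pt_lim f t (a t * f t).
Hypothesis hbound : forall t, 0 <= t <= T -> Rabs (a t) <= K.

Lemma derivable_pt_lim_weighted_sq (s t : R) : 0 <= t <= T ->
  derivable_pt_lim (fun t => f t * f t * exp (s * t)) t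
    (f t * f t * exp (s * t) * (2 * a t + s)).
Proof.
  intros ht.
  assert (hexp : derivable_pt_lim (fun t => exp (s * t)) t (exp (s * t) * (s * 1))).
  { apply (derivable_pt_lim_comp (mult_real_fct s id) exp).
    - apply derivable_pt_lim_scal, derivable_pt_lim_id.
    - apply derivable_pt_lim_exp. }
  pose proof (derivable_pt_lim_mult _ _ _ _ _ (hderiv t ht) (hderiv t ht)) as hsq.
  pose proof (derivable_pt_lim_mult _ _ _ _ _ hsq hexp) as hprod.
  match goal with |- derivable_pt_lim _ _ ?l => replace l with
    ((a t * f t * f t + f t * (a t * f t)) * exp (s * t)
     + f t * f t * (exp (s * t) * (s * 1))) by ring end.
  exact hprod.
Qed.

Lemma weighted_sq_decay (t : R) : 0 <= t <= T ->
  f t * f t * exp (- (2 * K) * t) <= f 0 * f 0.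
Proof.
  intros ht.
  replace (f 0 * f 0) with (f 0 * f 0 * exp (- (2 * K) * 0))
    by (rewrite Rmult_0_r, exp_0; ring).
  apply (le_of_derive_nonpos (fun t => f t * f t * exp (- (2 * K) * t))
    (fun t => f t * f t * exp (- (2 * K) * t) * (2 * a t + - (2 * K)))); [lra| |].
  - intros c hc; apply derivable_pt_lim_weighted_sq; lra.
  - intros c hc; pose proof (Rle_abs (a c)); pose proof (hbound c ltac:(lra)).
    assert (0 <= f c * f c * exp (- (2 * K) * c))
      by (apply Rmult_le_pos; [apply Rle_0_sqr | left; apply exp_pos]).
    nra.
Qed.

Lemma weighted_sq_growth (t : R) : 0 <= t <= T ->
  f 0 * f 0 <= f t * f t * exp (2 * K * t).
Proof.
  intros ht.
  replace (f 0 * f 0) with (f 0 * f 0 * exp (2 * K * 0))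
    by (rewrite Rmult_0_r, exp_0; ring).
  apply Ropp_le_cancel.
  apply (le_of_derive_nonpos (fun t => - (f t * f t * exp (2 * K * t)))
    (fun t => - (f t * f t * exp (2 * K * t) * (2 * a t + 2 * K)))); [lra| |].
  - intros c hc; apply derivable_pt_lim_opp, derivable_pt_lim_weighted_sq; lra.
  - intros c hc; pose proof (Rle_abs (- a c)); rewrite Rabs_Ropp in *.
    pose proof (hbound c ltac:(lra)).
    assert (0 <= f c * f c * exp (2 * K * c))
      by (apply Rmult_le_pos; [apply Rle_0_sqr | left; apply exp_pos]).
    nra.
Qed.

Lemma linear_zero_forward (t : R) : 0 <= t <= T -> f 0 = 0 -> f t = 0.
Proof.
  intros ht h0; pose proof (weighted_sq_decay t ht) as hdec; rewrite h0 in hdec.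
  pose proof (exp_pos (- (2 * K) * t)).
  assert (f t * f t <= 0).
  { apply (Rmult_le_reg_r (exp (- (2 * K) * t))); lra. }
  nra.
Qed.

Lemma linear_nonzero_forward (t : R) : 0 <= t <= T -> f 0 <> 0 -> f t <> 0.
Proof.
  intros ht h0 hzero; pose proof (weighted_sq_growth t ht) as hgrow.
  rewrite hzero in hgrow.
  assert (0 < f 0 * f 0) by (apply Rsqr_pos_lt; exact h0).
  lra.
Qed.

Lemma linear_pos_forward (t : R) : 0 <= t <= T -> 0 < f 0 -> 0 < f t.
Proof.
  intros ht h0; destruct (Rlt_le_dec 0 (f t)) as [|[hneg|hzero]]; [assumption| |];
    exfalso; [|exact (linear_nonzero_forward t ht ltac:(lra) hzero)].
  assert (ht0 : 0 < t) by (destruct (Req_dec t 0) as [->|]; lra).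
  destruct (IVT_interv (fun s => - f s) 0 t) as [c [hc hfc]]; [|lra|lra|lra|].
  - intros c hc; apply continuity_pt_opp, derivable_continuous_pt.
    exists (a c * f c); apply hderiv; lra.
  - apply (linear_nonzero_forward c ltac:(lra)); lra.
Qed.

End LinearEquation.

Section ControlSolution.
Variables (delta gamma D : R) (u : R -> R) (T : R) (z1 z2 : R -> R).
Hypothesis hsol : ctrl_solution delta gamma D u T z1 z2.

Lemma ctrl_solution_z1_linear (t : R) : 0 <= t <= T ->
  derivable_pt_lim z1 t (- (z1 t ^ 3 * z2 t) * z1 t).
Proof.
  intros ht.
  replace (- (z1 t ^ 3 * z2 t) * z1 t) with (- z1 t ^ 4 * z2 t) by ring.
  apply (hsol t ht).
Qed.

Lemma ctrl_solution_rate_bounded :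
  0 <= T -> exists K, forall t, 0 <= t <= T -> Rabs (- (z1 t ^ 3 * z2 t)) <= K.
Proof.
  intros hT.
  assert (hcont : forall z l, (forall t, 0 <= t <= T -> derivable_pt_lim z t (l t)) ->
            forall t, 0 <= t <= T -> continuity_pt z t).
  { intros z l hz t ht; apply derivable_continuous_pt; exists (l t); exact (hz t ht). }
  destruct (continuity_ab_maj (fun t => Rabs (- (z1 t ^ 3 * z2 t))) 0 T hT)
    as [M [hM _]]; [|exists (Rabs (- (z1 M ^ 3 * z2 M))); exact hM].
  intros t ht.
  apply (continuity_pt_comp (fun t => - (z1 t ^ 3 * z2 t)) Rabs);
    [|apply Rcontinuity_abs].
  apply continuity_pt_opp, (continuity_pt_mult (fun t => z1 t ^ 3) z2).
  - apply (continuity_pt_comp z1 (fun x => x ^ 3)).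
    + apply (hcont z1 _ (fun t ht => proj1 (hsol t ht)) t ht).
    + apply derivable_continuous_pt, derivable_pt_pow.
  - apply (hcont z2 _ (fun t ht => proj2 (hsol t ht)) t ht).
Qed.

End ControlSolution.

Lemma reach_from_pos (delta gamma D xi eta p q : R) :
  0 < xi -> reach delta gamma D xi eta p q -> 0 < p.
Proof.
  intros hxi [T [hT [u [z1 [z2 [_ [hsol [<- [_ [<- _]]]]]]]]]].
  destruct (ctrl_solution_rate_bounded _ _ _ _ _ _ _ hsol ltac:(lra)) as [K hK].
  exact (linear_pos_forward z1 (fun t => - (z1 t ^ 3 * z2 t)) T K (ctrl_solution_z1_linear _ _ _ _ _ _ _ hsol)
           hK T ltac:(lra) hxi).
Qed.

Lemma reach_from_axis (delta gamma D eta p q : R) :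
  reach delta gamma D 0 eta p q -> p = 0.
Proof.
  intros [T [hT [u [z1 [z2 [_ [hsol [h0 [_ [<- _]]]]]]]]]].
  destruct (ctrl_solution_rate_bounded _ _ _ _ _ _ _ hsol ltac:(lra)) as [K hK].
  exact (linear_zero_forward z1 (fun t => - (z1 t ^ 3 * z2 t)) T K (ctrl_solution_z1_linear _ _ _ _ _ _ _ hsol)
           hK T ltac:(lra) h0).
Qed.

Lemma closure2_self (S : set2) (p q : R) : S p q -> closure2 S p q.
Proof. intros h eps heps; exists p, q; rewrite !Rminus_diag, Rabs_R0; auto. Qed.

Lemma closure2_open_half_plane (S : set2) :
  (forall a b, 0 < a -> S a b) -> (forall a b, S a b -> 0 < a) ->
  set2_eq (closure2 S) (fun p _ => 0 <= p).
Proof.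
  intros hsup hsub p q; split.
  - intros hcl; destruct (Rle_lt_dec 0 p) as [|hp]; [assumption|exfalso].
    destruct (hcl (- p) ltac:(lra)) as [a [b [hab [hpa _]]]].
    pose proof (hsub a b hab); pose proof (Rle_abs (- (p - a))).
    rewrite Rabs_Ropp in *; lra.
  - intros hp eps heps; exists (p + eps / 2), q; split; [apply hsup; lra|].
    replace (p - (p + eps / 2)) with (- (eps / 2)) by ring.
    rewrite Rabs_Ropp, Rminus_diag, Rabs_R0, Rabs_right by lra; lra.
Qed.

Lemma closure2_axis (S : set2) (p q : R) :
  (forall a b, S a b -> a = 0) -> closure2 S p q -> p = 0.
Proof.
  intros haxis hcl; destruct (Req_dec p 0) as [|hp]; [assumption|exfalso].
  destruct (hcl (Rabs p) (Rabs_pos_lt p hp)) as [a [b [hab [hpa _]]]].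
  rewrite (haxis a b hab), Rminus_0_r in hpa; lra.
Qed.

Lemma closure_reach_from_pos (delta gamma D xi eta : R) : 0 < D -> 0 < xi ->
  set2_eq (closure2 (reach delta gamma D xi eta)) (fun p _ => 0 <= p).
Proof.
  intros hD hxi; apply closure2_open_half_plane.
  - intros p q hp; apply reach_of_pos; assumption.
  - intros p q; apply reach_from_pos; assumption.
Qed.

Lemma half_plane_ctrl_prop (delta gamma D : R) : 0 < D ->
  ctrl_prop delta gamma D (fun xi _ => 0 < xi).
Proof.
  intros hD xi eta hxi p q.
  rewrite (closure_reach_from_pos delta gamma D xi eta hD hxi p q).
  apply closure2_open_half_plane; auto.
Qed.

Lemma half_plane_maximal (delta gamma D : R) (C : set2) : 0 < D ->
  ctrl_prop delta gamma D C -> set2_sub (fun xi _ => 0 < xi) C ->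
  set2_sub C (fun xi _ => 0 < xi).
Proof.
  intros hD hC hsub p q hpq.
  assert (h10 : C 1 0) by (apply hsub; lra).
  assert (hp : 0 <= p).
  { apply (closure_reach_from_pos delta gamma D 1 0 hD ltac:(lra) p q).
    apply (hC 1 0 h10), closure2_self, hpq. }
  destruct hp as [|hp0]; [assumption|exfalso; subst p].
  assert (hcl : closure2 (reach delta gamma D 0 q) 1 0)
    by apply (hC 0 q hpq), closure2_self, h10.
  pose proof (closure2_axis _ 1 0 (reach_from_axis delta gamma D q) hcl); lra.
Qed.

Theorem mainTheorem13 (delta gamma D : R) (hgamma : 0 < gamma) (hD : 0 < D) :
  invariant_control_set delta gamma D (fun xi eta => 0 < xi).
Proof.
  split; [exists 1, 0; lra|].
  split; [apply half_plane_ctrl_prop; assumption|].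
  intros C _ hC hsub; exact (half_plane_maximal delta gamma D C hD hC hsub).
Qed.
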